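(* Let $r\in\mathbb Z_n$ and $1\le j\le\frac{n-1}2$, write $\mathcal U_k=\mathcal U_k(q^j+q^{-j})$, and let $\mathbf v=[1\ q^{2r}\ \cdots\ q^{2(n-1)r}]^T$. Put $\mathbf x_0=\mathbf v$ and for $1\le k\le n-1$ $$\mathbf x_k=q^{kr}\mathcal U_k\mathbf v+q^{(k-1)r}\sum_{s=0}^{\lfloor (k-1)/2\rfloor}(k-2s)\,\mathcal U_{k-1-2s}\mathbf v.$$ Then $\mathbf x_{j,r}=[\mathbf x_0;\dots;\mathbf x_{n-1}]$ satisfies $M\mathbf x_{j,r}=\lambda_{j,r}\mathbf x_{j,r}+\mathbf v_{j,r}$, where $\lambda_{j,r}=q^r(q^j+q^{-j})$ and $\mathbf v_{j,r}=[\mathbf v;\,q^r\mathcal U_1\mathbf v;\,\dots;\,q^{(n-1)r}\mathcal U_{n-1}\mathbf v]$ is a (nonzero) right eigenvector of $M$ with eigenvalue $\lambda_{j,r}$.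
   Context: $n\ge3$ odd, $q$ a primitive $n$-th root of unity in $\mathbb C$. $I$ is the $n\times n$ identity, $Z$ the $n\times n$ cyclic permutation matrix with $(Zu)_i=u_{i+1}$ (indices mod $n$). $M$ is the $n^2\times n^2$ block matrix of $n\times n$ blocks $M_{ab}$ ($0\le a,b\le n-1$) with $M_{a,a+1}=I$ ($0\le a\le n-2$), $M_{a,a-1}=Z$ ($1\le a\le n-2$), $M_{n-1,0}=2I$, $M_{n-1,n-2}=2Z$, other blocks zero (the McKay matrix of the $D_n$-module $V(2,0)$). $\mathcal U_k(t)$: $\mathcal U_0=1$, $\mathcal U_1=t$, $\mathcal U_k=t\mathcal U_{k-1}-\mathcal U_{k-2}$. Vectors in $\mathbb C^{n^2}$ are written as stacks of $n$ blocks of length $n$. *)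

From HB Require Import structures.
From mathcomp Require Import all_boot all_order all_algebra.
Set Implicit Arguments. Unset Strict Implicit. Unset Printing Implicit Defensive.
Import Order.TTheory GRing.Theory Num.Theory.
Local Open Scope ring_scope.

Section Defs.
Variable C : numClosedFieldType.

Fixpoint Ucheb (k : nat) (t : C) : C :=
  match k with
  | 0 => 1
  | 1 => t
  | (k'.+1 as k1).+1 => t * Ucheb k1 t - Ucheb k' t
  end.

Definition Zcyc (n : nat) : 'M[C]_n :=
  \matrix_(i < n, k < n) ((val k == (i.+1 %% n)%N)%:R).

Definition Mblock (n : nat) (a c : 'I_n) : 'M[C]_n :=
  if (val a < n.-1)%N then
    (if val c == (val a).+1 then 1%:M
     else if (0 < val a)%N && (val c == (val a).-1) then Zcyc n else 0)
  else
    (if val c == 0%N then 2%:M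
     else if val c == n.-2 then 2 *: Zcyc n else 0).

Definition Mmat (n : nat) := \mxblock_(a < n, c < n) Mblock a c.

Definition vvec (n : nat) (q : C) (r : nat) : 'cV[C]_n :=
  \col_(i < n) q ^+ (2 * i * r).

(* the k-th block x_k of x_{j,r}, with t = q^j + q^{-j} *)
Definition xblock (n : nat) (q t : C) (r k : nat) : 'cV[C]_n :=
  if k == 0%N then vvec n q r
  else q ^+ (k * r) * Ucheb k t *: vvec n q r
       + q ^+ (k.-1 * r) *:
         \sum_(s < (k.-1)./2.+1) (((k - 2 * s)%N)%:R * Ucheb (k - 1 - 2 * s) t) *: vvec n q r.

Definition xjr (n : nat) (q t : C) (r : nat) :=
  \mxcol_(k < n) xblock n q t r k.

Definition vjr (n : nat) (q t : C) (r : nat) :=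
  \mxcol_(k < n) ((q ^+ (k * r) * Ucheb k t) *: vvec n q r).

End Defs.

From HB Require Import structures.
From mathcomp Require Import all_boot all_order all_algebra.
From mathcomp Require Import ring zify.
Import Order.TTheory GRing.Theory Num.Theory.
Set Implicit Arguments. Unset Strict Implicit. Unset Printing Implicit Defensive.
Local Open Scope ring_scope.

(* Every block of v_{j,r} and of x_{j,r} is a scalar multiple
   of v, and v is an eigenvector of the cyclic shift: Z v = q^{2r} v.  Hence
   M acts on a stacked vector [f 0 v; ...; f (n-1) v] through a scalar
   recurrence on the coefficient sequence f (mckay_act, see Mmat_mxcol):
     (Mf)_a = f_{a+1} + [a>0] Q^2 f_{a-1}       for a < n-1,
     (Mf)_{n-1} = 2 f_0 + 2 Q^2 f_{n-2},        where Q = q^r.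
   The theorem thus reduces to two scalar identities, for the coefficients
   Q^k U_k (eigenvector) and Q^k U_k + Q^(k-1) S_k (generalized eigenvector),
   where S_k = sum_s (k-2s) U_{k-1-2s}.  The interior rows follow from the
   Chebyshev recurrence and the three-term recurrence of S_k; the last row
   uses the boundary values U_{n-1}(t) = 0 and U_{n-2}(t) = -1, valid because
   t = x + x^-1 with x = q^j an n-th root of unity with x^2 <> 1
   (from (x - x^-1) U_k(x + x^-1) = x^{k+1} - x^{-(k+1)}). *)

Lemma nat_ind2 (P : nat -> Prop) :
  P 0%N -> P 1%N -> (forall k, P k -> P k.+1 -> P k.+2) -> forall k, P k.
Proof.
move=> P0 P1 PSS k; suff: P k /\ P k.+1 by case.
by elim: k => [|k [Pk Pk1]]; split=> //; apply: PSS.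
Qed.

Lemma expr_mod (R : pzRingType) (q : R) (n a b : nat) :
  q ^+ n = 1 -> a = b %[mod n] -> q ^+ a = q ^+ b.
Proof.
move=> q_n eq_ab; have qkn k : q ^+ (k * n) = 1 by rewrite mulnC exprM q_n expr1n.
by rewrite (divn_eq a n) (divn_eq b n) eq_ab !exprD !qkn.
Qed.

Lemma sum_delta (R : pzSemiRingType) (n m : nat) (F : nat -> R) : (m < n)%N ->
  \sum_(c < n) ((val c == m)%:R * F c) = F m.
Proof.
move=> lt_mn; rewrite (bigD1 (Ordinal lt_mn)) //= eqxx mul1r big1 ?addr0 // => c.
by rewrite -val_eqE /= => /negbTE ->; rewrite mul0r.
Qed.

Lemma scale_mxcol (R : pzRingType) (m k : nat) (p_ : 'I_m -> nat) (a : R)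
    (B_ : forall i, 'M[R]_(p_ i, k)) :
  a *: \mxcol_i B_ i = \mxcol_i (a *: B_ i).
Proof. by apply/matrixP => i l; rewrite !mxE. Qed.

Section Chebyshev.
Variable C : numClosedFieldType.
Implicit Types (t x y : C) (k : nat).

Lemma Ucheb0 t : Ucheb 0 t = 1. Proof. by []. Qed.
Lemma Ucheb1 t : Ucheb 1 t = t. Proof. by []. Qed.
Lemma UchebSS k t : Ucheb k.+2 t = t * Ucheb k.+1 t - Ucheb k t.
Proof. by []. Qed.

Lemma Ucheb_sum_inverse x y k : x * y = 1 ->
  (x - y) * Ucheb k (x + y) = x ^+ k.+1 - y ^+ k.+1.
Proof.
move=> xy1; elim/nat_ind2: k => [||k IHk IHk1]; first by rewrite Ucheb0; ring.
  by rewrite Ucheb1; ring.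
rewrite UchebSS.
have -> : (x - y) * ((x + y) * Ucheb k.+1 (x + y) - Ucheb k (x + y)) =
  (x + y) * ((x - y) * Ucheb k.+1 (x + y)) - (x * y) * ((x - y) * Ucheb k (x + y)).
  by rewrite xy1; ring.
by rewrite IHk IHk1 !exprS; ring.
Qed.

(* Boundary values of U at t = x + x^-1 for an n-th root of unity x <> +-1:
   these make the last block row of M work out. *)
Lemma Ucheb_unity_root x n : (1 < n)%N -> x ^+ 2 != 1 -> x ^+ n = 1 ->
  Ucheb n.-1 (x + x^-1) = 0 /\ Ucheb n.-2 (x + x^-1) = -1.
Proof.
case: n => [|[|m]] // _ x2 xn; rewrite !succnK.
have x0 : x != 0 by apply: contra_eq_neq xn => ->; rewrite expr0n eq_sym oner_eq0.
have xy1 : x * x^-1 = 1 by rewrite mulfV.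
have xyn : x^-1 ^+ m.+2 = 1 by rewrite exprVn xn invr1.
have xy0 : x - x^-1 != 0.
  by rewrite subr_eq0; apply: contraNneq x2 => e; rewrite expr2 {2}e xy1.
have U_n1 : Ucheb m.+1 (x + x^-1) = 0.
  by apply: (mulfI xy0); rewrite Ucheb_sum_inverse // xn xyn subrr mulr0.
have U_n : Ucheb m.+2 (x + x^-1) = 1.
  by apply: (mulfI xy0); rewrite Ucheb_sum_inverse // !(exprS _ m.+2) xn xyn !mulr1.
split=> //; apply/eqP; rewrite -eqr_oppLR -U_n.
by rewrite UchebSS U_n1 mulr0 sub0r.
Qed.
End Chebyshev.

Section WeightedSum.
Variables (C : numClosedFieldType) (t : C).

Definition Usum (k : nat) : C :=
  \sum_(s < (k.-1)./2.+1) (((k - 2 * s)%N)%:R * Ucheb (k - 1 - 2 * s) t).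

Lemma Usum0 : Usum 0 = 0.
Proof. by rewrite /Usum big_ord1 mul0r. Qed.

Lemma Usum1 : Usum 1 = 1.
Proof. by rewrite /Usum big_ord1 mul1r. Qed.

Lemma UsumSS k : Usum k.+2 = Usum k + k.+2%:R * Ucheb k.+1 t.
Proof.
case: k => [|k]; first by rewrite Usum0 add0r /Usum big_ord1.
rewrite /Usum big_ord_recl addrC; congr (_ + _).
by apply: eq_bigr => s _; rewrite lift0 mulnS !subnDA.
Qed.

Lemma Usum_mul k : t * Usum k.+1 = 2 * Usum k + k.+1%:R * Ucheb k.+1 t.
Proof.
elim/nat_ind2: k => [||k IHk _].
- by rewrite Usum0 Usum1 Ucheb1; ring.
- by rewrite UsumSS Usum0 Usum1 UchebSS Ucheb1 Ucheb0; ring.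
by rewrite !UsumSS mulrDr IHk !UchebSS -!natr1; ring.
Qed.

Lemma Usum_three_term k : Usum k.+2 + Usum k = t * Usum k.+1 + Ucheb k.+1 t.
Proof. by rewrite UsumSS Usum_mul -natr1; ring. Qed.
End WeightedSum.

Section ScalarMcKay.
Variables (C : numClosedFieldType) (n : nat) (Q : C).

(* The scalar by which the block M_{ac} acts on v (with Q = q^r). *)
Definition mckay_entry (a c : nat) : C :=
  if (a < n.-1)%N then (c == a.+1)%:R + ((0 < a)%N && (c == a.-1))%:R * Q ^+ 2
  else (c == 0)%:R * 2 + (c == n.-2)%:R * (2 * Q ^+ 2).

Definition mckay_act (f : nat -> C) (a : nat) : C :=
  if (a < n.-1)%N then f a.+1 + (0 < a)%:R * Q ^+ 2 * f a.-1
  else 2 * f 0%N + 2 * Q ^+ 2 * f n.-2.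
End ScalarMcKay.

Section McKayAction.
Variables (C : numClosedFieldType) (n : nat) (q : C) (r : nat).
Hypotheses (n_ge3 : (3 <= n)%N) (q_n : q ^+ n = 1).

Let Q := q ^+ r.

Lemma Zcyc_vvec : Zcyc C n *m vvec n q r = Q ^+ 2 *: vvec n q r.
Proof.
apply/matrixP => i k; rewrite !mxE.
under eq_bigr do rewrite !mxE.
rewrite (sum_delta (fun l => q ^+ (2 * l * r))) ?ltn_pmod //; last by lia.
rewrite /Q -!exprM -exprD; apply: (expr_mod q_n).
by rewrite mulnAC mulnC modnMml; congr (_ %% n)%N; lia.
Qed.

Lemma Mblock_vvec (a c : 'I_n) :
  Mblock C a c *m vvec n q r = mckay_entry n Q a c *: vvec n q r.
Proof.
rewrite /Mblock /mckay_entry; case: ifP => lt_a.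
  have [->|_] := eqVneq (val c) (val a).+1.
    have -> : ((val a).+1 == (val a).-1) = false by apply/eqP; lia.
    by rewrite andbF mul0r addr0 mul1mx scale1r.
  rewrite add0r; case: ifP => _; last by rewrite mul0r scale0r mul0mx.
  by rewrite mul1r Zcyc_vvec.
have [->|_] := eqVneq (val c) 0%N.
  have ne_0n : (0 == n.-2)%N = false by apply/eqP; lia.
  by rewrite ne_0n mul0r addr0 mul1r mul_scalar_mx.
rewrite mul0r add0r; case: ifP => _; last by rewrite mul0r scale0r mul0mx.
by rewrite mul1r -scalemxAl Zcyc_vvec scalerA mulrC.
Qed.

Lemma mckay_entry_sum (f : nat -> C) (a : nat) : (a < n)%N ->
  \sum_(c < n) mckay_entry n Q a c * f c = mckay_act n Q f a.
Proof.
move=> lt_an; rewrite /mckay_entry /mckay_act; set Q2 := Q ^+ 2; case: ifP => lt_a.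
  under eq_bigr do rewrite mulrDl.
  rewrite big_split /= sum_delta; last by lia.
  congr (_ + _); case: posnP => [->|a_gt0] /=.
    by rewrite !mul0r big1 // => c _; rewrite !mul0r.
  under eq_bigr do rewrite -mulrA.
  by rewrite (sum_delta (fun c => Q2 * f c)) ?mul1r ?mulrA //; lia.
under eq_bigr do rewrite mulrDl -[(_ == 0)%:R * _ * _]mulrA -[(_ == n.-2)%:R * _ * _]mulrA.
rewrite big_split /= (sum_delta (fun c => 2 * f c)); last by lia.
by rewrite (sum_delta (fun c => 2 * Q2 * f c)) //; lia.
Qed.

Lemma Mmat_mxcol (f : nat -> C) :
  Mmat C n *m \mxcol_(k < n) (f k *: vvec n q r) =
  \mxcol_(a < n) (mckay_act n Q f a *: vvec n q r).
Proof.
rewrite /Mmat mul_mxblock_mxrow; apply: eq_mxcol => a.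
under eq_bigr do rewrite -scalemxAr Mblock_vvec scalerA mulrC.
by rewrite -scaler_suml (mckay_entry_sum f (ltn_ord a)).
Qed.
End McKayAction.

Section Coefficients.
Variables (C : numClosedFieldType) (Q t : C).

(* Block coefficients of v_{j,r} and x_{j,r}: Q^k U_k and
   Q^k U_k + Q^(k-1) S_k. *)
Definition eigen_coef (k : nat) : C := Q ^+ k * Ucheb k t.

Definition gen_coef (k : nat) : C := Q ^+ k * Ucheb k t + Q ^+ k.-1 * Usum t k.

Variable n : nat.
Hypotheses (n_ge3 : (3 <= n)%N) (Q_n : Q ^+ n = 1).
Hypotheses (U_n1 : Ucheb n.-1 t = 0) (U_n2 : Ucheb n.-2 t = -1).

Lemma mckay_act_eigen a : (a < n)%N ->
  mckay_act n Q eigen_coef a = Q * t * eigen_coef a.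
Proof.
rewrite /mckay_act /eigen_coef => lt_an; case: ifP => lt_a.
  case: a {lt_an lt_a} => [|a]; first by rewrite /=; ring.
  by rewrite UchebSS; move: (Ucheb a.+1 t) (Ucheb a t) => u1 u0 /=; rewrite !exprS; ring.
have -> : a = n.-1 by lia.
have [m n_eq] : exists m, n = m.+3 by exists (n - 3)%N; lia.
move: U_n1 U_n2 Q_n; rewrite n_eq !succnK => -> -> Q_m3.
rewrite !mulr0; transitivity (2 * (1 - Q ^+ m.+3)); first by rewrite Ucheb0 !exprS; ring.
by rewrite Q_m3 subrr mulr0.
Qed.

Lemma mckay_act_gen a : (a < n)%N ->
  mckay_act n Q gen_coef a = Q * t * gen_coef a + eigen_coef a.
Proof.
rewrite /mckay_act /gen_coef /eigen_coef => lt_an; case: ifP => lt_a.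
  case: a {lt_an lt_a} => [|[|k]].
  - by rewrite Usum0 Usum1 /=; ring.
  - by rewrite UsumSS Usum0 Usum1 /=; ring.
  have -> : Usum t k.+3 = t * Usum t k.+2 + Ucheb k.+2 t - Usum t k.+1.
    by rewrite -Usum_three_term addrK.
  rewrite UchebSS; move: (Ucheb k.+2 t) (Ucheb k.+1 t) => u2 u1.
  move: (Usum t k.+2) (Usum t k.+1) => s2 s1 /=; rewrite !exprS; ring.
have -> : a = n.-1 by lia.
have [m n_eq] : exists m, n = m.+3 by exists (n - 3)%N; lia.
move: U_n1 U_n2 Q_n; rewrite n_eq !succnK => U_m2 U_m1 Q_m3.
have t_Usum : t * Usum t m.+2 = 2 * Usum t m.+1 by rewrite Usum_mul U_m2 mulr0 addr0.
rewrite U_m2 U_m1 Ucheb0 Usum0 !mulr0 !addr0 add0r.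
transitivity (2 * (1 - Q ^+ m.+3) + Q ^+ m.+2 * (2 * Usum t m.+1)).
  by rewrite !exprS; ring.
by rewrite Q_m3 subrr mulr0 add0r -t_Usum !exprS; ring.
Qed.
End Coefficients.

Lemma prim_root_sqr_neq1 (R : idomainType) (n j : nat) (q : R) :
  n.-primitive_root q -> (0 < j)%N -> (j <= (n.-1)./2)%N -> (q ^+ j) ^+ 2 != 1.
Proof.
move=> prim j_gt0 j_le; rewrite -exprM -(prim_order_dvd prim).
apply: contraL j_le => /dvdn_leq; rewrite muln_gt0 j_gt0 => /(_ isT).
by rewrite geq_half_double -muln2; lia.
Qed.

Section Blocks.
Variables (C : numClosedFieldType) (n : nat) (q t : C) (r : nat).

Lemma xjr_mxcol :
  xjr n q t r = \mxcol_(k < n) (gen_coef (q ^+ r) t k *: vvec n q r).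
Proof.
apply: eq_mxcol => k; rewrite /xblock /gen_coef; case: eqP => [->|_].
  by rewrite Usum0 Ucheb0 mulr0 addr0 mulr1 scale1r.
by rewrite -scaler_suml scalerA scalerDl -!exprM !(mulnC r).
Qed.

Lemma vjr_mxcol :
  vjr n q t r = \mxcol_(k < n) (eigen_coef (q ^+ r) t k *: vvec n q r).
Proof. by apply: eq_mxcol => k; rewrite /eigen_coef -exprM mulnC. Qed.

(* The top entry of v_{j,r} is 1. *)
Lemma vjr_neq0 : (0 < n)%N -> vjr n q t r != 0.
Proof.
move=> n_gt0; apply/eqP => /(congr1 (fun A => submxcol A (Ordinal n_gt0))).
rewrite mxcolK submxcol0 => /matrixP /(_ (Ordinal n_gt0) ord0).
by rewrite !mxE /= muln0 mul0n !expr0 !mul1r => /eqP; rewrite oner_eq0.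
Qed.
End Blocks.

Theorem mainTheorem13 (C : numClosedFieldType) (n : nat) (q : C) (r : 'I_n) (j : nat) :
  odd n -> (3 <= n)%N -> n.-primitive_root q ->
  (1 <= j)%N -> (j <= (n.-1)./2)%N ->
  let t := q ^+ j + (q ^+ j)^-1 in
  let lambda := q ^+ r * t in
  Mmat C n *m xjr n q t r = lambda *: xjr n q t r + vjr n q t r /\
  Mmat C n *m vjr n q t r = lambda *: vjr n q t r /\
  vjr n q t r != 0.
Proof.
move=> _ n_ge3 prim j_gt0 j_le t lambda.
have q_n : q ^+ n = 1 := prim_expr_order prim.
have Q_n : (q ^+ r) ^+ n = 1 by rewrite exprAC q_n expr1n.
have [U_n1 U_n2] : Ucheb n.-1 t = 0 /\ Ucheb n.-2 t = -1.
  apply: (Ucheb_unity_root (x := q ^+ j)); first exact: ltnW.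
    exact: prim_root_sqr_neq1 prim j_gt0 j_le.
  by rewrite exprAC q_n expr1n.
split; [|split]; last by apply: vjr_neq0; apply: ltnW; apply: ltnW.
- rewrite xjr_mxcol vjr_mxcol Mmat_mxcol // scale_mxcol -mxcolD.
  apply: eq_mxcol => a.
  by rewrite (mckay_act_gen n_ge3 Q_n U_n1 U_n2 (ltn_ord a)) scalerA scalerDl.
- rewrite vjr_mxcol Mmat_mxcol // scale_mxcol; apply: eq_mxcol => a.
  by rewrite (mckay_act_eigen n_ge3 Q_n U_n1 U_n2 (ltn_ord a)) scalerA.
Qed.
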